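(* Let $\mathbb P=\langle P,<\rangle$ be a strict partial order with $|P|=\kappa\ge\omega$ satisfying (u1) for all nonempty $L,G\in[P]^{<\kappa}$ with $L<G$ there is $x\in P$ with $L<x<G$; (u2) for every nonempty $K\in[P]^{<\kappa}$ there are $x,y,z\in P$ with $x<K$, $y>K$ and $z\parallel K$. Let $L,G,K\in[P]^{<\kappa}$ be nonempty with $L<G$. Then: (a) $|\{x\in P:L<x<G\}|=\kappa$; (b) $|\{x\in P:x<K\}|=|\{x\in P:x>K\}|=|\{x\in P:x\parallel K\}|=\kappa$; (c) if $\kappa$ is a regular cardinal, then $\mathbb P$ is not reversible. (d) Consequently, if $\kappa$ is a regular infinite cardinal and $\mathbb P$ is a $\kappa$-homogeneous-universal poset of size $\kappa$, then $\mathbb P$ is not reversible (in particular, the countable random poset is not reversible).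
   Context: $[P]^{<\kappa}$ is the set of subsets of $P$ of size $<\kappa$. For $p,q\in P$, $p\parallel q$ means $p\not\le q$ and $q\not\le p$. For $A,B\subseteq P$, $A<B$ means $a<b$ for all $a\in A,b\in B$; $x<K$ means $\{x\}<K$, etc., and $z\parallel K$ means $z\parallel k$ for all $k\in K$. A structure is reversible iff every bijective homomorphism from it onto itself (i.e. bijection $F:P\to P$ with $p<q\Rightarrow F(p)<F(q)$) is an automorphism. A poset $\mathbb P$ of size $\kappa$ is $\kappa$-homogeneous-universal iff every isomorphism between substructures of $\mathbb P$ of size $<\kappa$ extends to an automorphism of $\mathbb P$, and every poset of size $\le\kappa$ embeds into $\mathbb P$. *)

(* Cardinalities are expressed via injections (no cardinal library).
   kappa := |P|.  For S a subset of P (a predicate), |S| = kappa iff P injects into S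
   (Cantor-Schroeder-Bernstein), and |S| < kappa iff P does not inject into S. *)
From Stdlib Require Import Classical.

Definition injective {A B : Type} (f : A -> B) : Prop :=
  forall x y, f x = f y -> x = y.

Definition strict_po {P : Type} (lt : P -> P -> Prop) : Prop :=
  (forall x, ~ lt x x) /\ (forall x y z, lt x y -> lt y z -> lt x z).

Definition infinite_type (P : Type) : Prop :=
  exists f : nat -> P, injective f.

Definition full_size {P : Type} (S : P -> Prop) : Prop :=
  exists f : P -> P, injective f /\ forall p, S (f p).

Definition small {P : Type} (S : P -> Prop) : Prop := ~ full_size S.

Definition nonempty {P : Type} (S : P -> Prop) : Prop := exists x, S x.

Definition le_of {P : Type} (lt : P -> P -> Prop) (x y : P) : Prop := lt x y \/ x = y.

Definition incomp {P : Type} (lt : P -> P -> Prop) (p q : P) : Prop :=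
  ~ le_of lt p q /\ ~ le_of lt q p.

Definition setlt {P : Type} (lt : P -> P -> Prop) (A B : P -> Prop) : Prop :=
  forall a b, A a -> B b -> lt a b.

Definition below {P : Type} (lt : P -> P -> Prop) (x : P) (K : P -> Prop) : Prop :=
  forall k, K k -> lt x k.
Definition above {P : Type} (lt : P -> P -> Prop) (x : P) (K : P -> Prop) : Prop :=
  forall k, K k -> lt k x.
Definition incomp_set {P : Type} (lt : P -> P -> Prop) (x : P) (K : P -> Prop) : Prop :=
  forall k, K k -> incomp lt x k.

Definition u1 {P : Type} (lt : P -> P -> Prop) : Prop :=
  forall L G : P -> Prop, nonempty L -> nonempty G -> small L -> small G ->
    setlt lt L G -> exists x, above lt x L /\ below lt x G.

Definition u2 {P : Type} (lt : P -> P -> Prop) : Prop :=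
  forall K : P -> Prop, nonempty K -> small K ->
    exists x y z, below lt x K /\ above lt y K /\ incomp_set lt z K.

Definition regular_size (P : Type) : Prop :=
  forall (I : Type) (F : I -> P -> Prop),
    (~ exists g : P -> I, injective g) ->
    (forall i, small (F i)) ->
    small (fun p => exists i, F i p).

Definition bijective {A B : Type} (f : A -> B) : Prop :=
  injective f /\ forall y, exists x, f x = y.

Definition homomorphism {P : Type} (lt : P -> P -> Prop) (F : P -> P) : Prop :=
  forall p q, lt p q -> lt (F p) (F q).

Definition automorphism {P : Type} (lt : P -> P -> Prop) (F : P -> P) : Prop :=
  bijective F /\ forall p q, lt p q <-> lt (F p) (F q).

Definition reversible {P : Type} (lt : P -> P -> Prop) : Prop :=
  forall F : P -> P, bijective F -> homomorphism lt F -> automorphism lt F.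

Definition partial_iso {P : Type} (lt : P -> P -> Prop) (A B : P -> Prop) (f : P -> P) : Prop :=
  (forall a, A a -> B (f a)) /\
  (forall a a', A a -> A a' -> f a = f a' -> a = a') /\
  (forall b, B b -> exists a, A a /\ f a = b) /\
  (forall a a', A a -> A a' -> (lt a a' <-> lt (f a) (f a'))).

Definition embedding {Q P : Type} (ltQ : Q -> Q -> Prop) (lt : P -> P -> Prop) (e : Q -> P) : Prop :=
  injective e /\ forall q q', ltQ q q' <-> lt (e q) (e q').

Definition homogeneous_universal {P : Type} (lt : P -> P -> Prop) : Prop :=
  (forall (A B : P -> Prop) (f : P -> P), small A -> small B -> partial_iso lt A B f ->
     exists g, automorphism lt g /\ forall a, A a -> g a = f a) /\
  (forall (Q : Type) (ltQ : Q -> Q -> Prop), strict_po ltQ ->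
     (exists h : Q -> P, injective h) ->
     exists e : Q -> P, embedding ltQ lt e).

From Stdlib Require Import Classical ClassicalEpsilon FunctionalExtensionality ProofIrrelevance
  Wellfounded.
From mathcomp Require ssreflect ssrbool eqtype boolp wochoice.

(* If one of the sets in (a) or (b) had size < kappa, then (u1) or (u2), applied to that
   set itself, would produce an element of the set lying strictly above, strictly below
   or incomparable to all of its elements, itself included.

   For (c), enumerate P along a well-order whose initial segments have size < kappa and
   build, by a back-and-forth recursion along it, an increasing bijection extending
   a |-> a, b |-> d where a is incomparable to b and a < d.  By regularity every stage
   is a partial map with domain and range of size < kappa; in a forth step (a) provides an
   unused image in the required interval, in a back step (u2) provides a preimage that is
   incomparable to the whole current domain, so no order constraint arises.  The
   resulting bijective homomorphism sends the incomparable pair a, b to a < d.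

   For (d), universality embeds any one-point extension of P into P, and homogeneity moves
   the embedded copy of a small substructure back onto itself; the image of the new point
   witnesses (u1) and (u2). *)

Module WellOrder.
Import ssreflect ssrbool eqtype boolp wochoice.

Lemma strict_well_order_exists (T : Type) :
  exists W : T -> T -> Prop,
    well_founded W /\ forall x y, x <> y -> W x y \/ W y x.
Proof.
have [R Rwo] := well_ordering_principle {classic T}.
have Rchain : wo_chain R predT by apply: withinW.
pose W := fun x y : {classic T} => R x y /\ x <> y.
exists W; split.
- move=> x; apply: NNPP => notAcc.
  have [|m [[/asboolP notAccm lbm] _]] := Rwo (fun z => `[< ~ Acc W z >]).
    by exists x; apply/asboolP.
  apply: notAccm; constructor=> y [Rym neq]; apply: NNPP => notAccy.
  apply: neq; apply: (wo_chain_antisymmetric Rchain) => //.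
  by rewrite Rym lbm //; apply/asboolP.
- move=> x y neq; case/orP: (@wo_chainW _ _ _ Rchain x y isT isT) => [Rxy|Ryx].
  + by left.
  + by right; split=> // eq; apply: neq.
Qed.
End WellOrder.

Definition dom {P : Type} (U : P -> P -> Prop) (a : P) : Prop := exists b, U a b.
Definition ran {P : Type} (U : P -> P -> Prop) (b : P) : Prop := exists a, U a b.
Definition incl {P : Type} (U V : P -> P -> Prop) : Prop := forall a b, U a b -> V a b.

Lemma well_founded_minimal {T : Type} (W : T -> T -> Prop) (A : T -> Prop) :
  well_founded W -> (exists x, A x) -> exists m, A m /\ forall x, A x -> ~ W x m.
Proof.
  intros W_wf [x Ax]. revert Ax. induction (W_wf x) as [x _ IH]. intros Ax.
  destruct (classic (exists y, A y /\ W y x)) as [[y [Ay Wyx]] | no_smaller].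
  - exact (IH y Wyx Ay).
  - exists x. split; [exact Ax|]. intros y Ay Wyx. apply no_smaller. exists y. auto.
Qed.

Section Size.
Variable P : Type.
Implicit Types (S T : P -> Prop) (p q r : P).

Lemma full_size_mono S T : full_size S -> (forall x, S x -> T x) -> full_size T.
Proof. intros [f [f_inj Sf]] ST. exists f. split; auto. Qed.

Lemma small_sub S T : small S -> (forall x, T x -> S x) -> small T.
Proof. intros HS TS HT. apply HS. exact (full_size_mono T S HT TS). Qed.

Lemma small_image (M : P -> Prop) (phi : P -> P) :
  small M -> small (fun y => exists m, M m /\ y = phi m).
Proof.
  intros HM [h [h_inj h_im]]. apply HM.
  set (k p := epsilon (inhabits p) (fun m => M m /\ h p = phi m)).
  assert (Hk : forall p, M (k p) /\ h p = phi (k p)) by (intro p; apply epsilon_spec, h_im).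
  exists k. split.
  - intros p q E. apply h_inj. rewrite (proj2 (Hk p)), (proj2 (Hk q)), E. reflexivity.
  - intro p. apply Hk.
Qed.

Lemma full_size_not_small S T : full_size S -> small T -> exists y, S y /\ ~ T y.
Proof.
  intros HS HT. apply NNPP. intro none. apply HT. apply (full_size_mono S); [exact HS|].
  intros x Sx. apply NNPP. intro nTx. apply none. exists x. auto.
Qed.

Lemma full_size_of_fresh (R : P -> P -> Prop) S :
  (forall x, ~ R x x) -> (small S -> exists x, S x /\ forall y, S y -> R y x) -> full_size S.
Proof.
  intros R_irr fresh. apply NNPP. intro HS.
  destruct (fresh HS) as [x [Sx Hx]]. exact (R_irr x (Hx x Sx)).
Qed.

(* Either every initial segment of a well-order of P is small, or the least initial segment
   of size kappa, pulled back to P along an injection, is a well-order of type kappa. *)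
Lemma small_segment_well_order :
  exists W : P -> P -> Prop,
    well_founded W /\ (forall v w, v <> w -> W v w \/ W w v) /\
    forall w, small (fun v => W v w).
Proof.
  destruct (WellOrder.strict_well_order_exists P) as [W0 [W0_wf W0_total]].
  destruct (classic (exists p, full_size (fun v => W0 v p))) as [Hfull | Hsmall].
  - destruct (well_founded_minimal W0 _ W0_wf Hfull) as [p0 [[h [h_inj h_seg]] p0_min]].
    exists (fun v w => W0 (h v) (h w)). split; [|split].
    + exact (wf_inverse_image P P W0 h W0_wf).
    + intros v w neq. apply W0_total. intro E. apply neq, h_inj, E.
    + intros w [f [f_inj f_seg]]. apply (p0_min (h w)); [|apply h_seg].
      exists (fun p => h (f p)). split; [|exact f_seg].
      intros p q E. apply f_inj, h_inj, E.
  - exists W0. split; [exact W0_wf | split; [exact W0_total|]].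
    intros w Hw. apply Hsmall. exists w. exact Hw.
Qed.

Section Infinite.
Hypothesis P_infinite : infinite_type P.

Lemma infinite_shift : exists (p0 : P) (sh : P -> P), injective sh /\ forall p, sh p <> p0.
Proof.
  destruct P_infinite as [e e_inj].
  set (index p := epsilon (inhabits 0) (fun n => p = e n)).
  assert (index_spec : forall p, (exists n, p = e n) -> p = e (index p))
    by (intros p Hp; apply epsilon_spec, Hp).
  exists (e 0), (fun p => if excluded_middle_informative (exists n, p = e n)
                          then e (S (index p)) else p).
  split.
  - intros p q.
    destruct (excluded_middle_informative (exists n, p = e n)) as [Hp|Hp];
    destruct (excluded_middle_informative (exists n, q = e n)) as [Hq|Hq]; intro E.
    + apply e_inj in E. injection E as E.
      rewrite (index_spec p Hp), (index_spec q Hq), E. reflexivity.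
    + exfalso. apply Hq. exists (S (index p)). auto.
    + exfalso. apply Hp. exists (S (index q)). auto.
    + exact E.
  - intro p. destruct (excluded_middle_informative (exists n, p = e n)) as [Hp|Hp]; intro E.
    + apply e_inj in E. discriminate.
    + apply Hp. exists 0. exact E.
Qed.

Lemma small_empty : small (fun _ : P => False).
Proof. pose proof P_infinite as [e _]. intros [f [_ Hf]]. exact (Hf (e 0)). Qed.

(* Hilbert's hotel: the shift frees the value [f p0] for the one point sent to [q]. *)
Lemma small_setU1 S q : small S -> small (fun x => S x \/ x = q).
Proof.
  intros HS [f [f_inj Sf]]. apply HS.
  destruct infinite_shift as [p0 [sh [sh_inj sh_p0]]].
  exists (fun x => if excluded_middle_informative (f (sh x) = q) then f p0 else f (sh x)).
  split.
  - intros x y.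
    destruct (excluded_middle_informative (f (sh x) = q)) as [Ex|Ex];
    destruct (excluded_middle_informative (f (sh y) = q)) as [Ey|Ey]; intro E.
    + apply sh_inj, f_inj. congruence.
    + apply f_inj in E. exfalso. exact (sh_p0 y (eq_sym E)).
    + apply f_inj in E. exfalso. exact (sh_p0 x E).
    + apply sh_inj, f_inj, E.
  - intro x. destruct (excluded_middle_informative (f (sh x) = q)) as [Ex|Ex].
    + destruct (Sf p0) as [H|H]; [exact H|].
      exfalso. apply (sh_p0 x), f_inj. congruence.
    + destruct (Sf (sh x)) as [H|H]; [exact H | contradiction].
Qed.

Lemma small_single q : small (fun x => x = q).
Proof.
  apply (small_sub (fun x => False \/ x = q)); [exact (small_setU1 _ q small_empty)|].
  intros x Hx. right. exact Hx.
Qed.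

Lemma small_pair q r : small (fun x => x = q \/ x = r).
Proof. exact (small_setU1 _ r (small_single q)). Qed.

Hypothesis P_regular : regular_size P.

Lemma small_setU S T : small S -> small T -> small (fun x => S x \/ T x).
Proof.
  intros HS HT.
  apply (small_sub (fun x => exists i : bool, (if i then S else T) x)).
  - apply P_regular; [|intros [|]; assumption].
    intros [g g_inj]. destruct P_infinite as [e e_inj].
    assert (E : forall n m, g (e n) = g (e m) -> n = m) by (intros n m E; apply e_inj, g_inj, E).
    destruct (g (e 0)) eqn:E0; destruct (g (e 1)) eqn:E1; destruct (g (e 2)) eqn:E2;
    first [ discriminate (E 0 1 ltac:(congruence))
          | discriminate (E 0 2 ltac:(congruence))
          | discriminate (E 1 2 ltac:(congruence)) ].
  - intros x [Sx|Tx]; [exists true | exists false]; assumption.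
Qed.

Lemma small_bigcup (I : P -> Prop) (F : P -> P -> Prop) :
  small I -> (forall i, I i -> small (F i)) -> small (fun x => exists i, I i /\ F i x).
Proof.
  intros HI HF.
  apply (small_sub (fun x => exists i : {i | I i}, F (proj1_sig i) x)).
  - apply P_regular.
    + intros [g g_inj]. apply HI. exists (fun p => proj1_sig (g p)). split.
      * intros p q E. apply g_inj, eq_sig_hprop; [intros; apply proof_irrelevance | exact E].
      * intro p. exact (proj2_sig (g p)).
    + intros [i Ii]. exact (HF i Ii).
  - intros x [i [Ii Hx]]. exists (exist _ i Ii). exact Hx.
Qed.

End Infinite.
End Size.

Section Poset.
Variables (P : Type) (lt : P -> P -> Prop).
Hypotheses (lt_po : strict_po lt) (P_infinite : infinite_type P).
Implicit Types (L G K S : P -> Prop) (a b p q x y z : P).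

Lemma lt_irrefl x : ~ lt x x.
Proof. exact (proj1 lt_po x). Qed.

Lemma lt_trans x y z : lt x y -> lt y z -> lt x z.
Proof. exact (proj2 lt_po x y z). Qed.

Lemma le_lt_trans x y z : le_of lt x y -> lt y z -> lt x z.
Proof. intros [xy | ->] yz; [exact (lt_trans x y z xy yz) | exact yz]. Qed.

Lemma lt_le_trans x y z : lt x y -> le_of lt y z -> lt x z.
Proof. intros xy [yz | <-]; [exact (lt_trans x y z xy yz) | exact xy]. Qed.

Lemma le_trans x y z : le_of lt x y -> le_of lt y z -> le_of lt x z.
Proof. intros [xy | ->] yz; [left; exact (lt_le_trans x y z xy yz) | exact yz]. Qed.

Let empty_small : small (fun _ : P => False) := small_empty P P_infinite.

Section Universal.
Hypotheses (Hu1 : u1 lt) (Hu2 : u2 lt).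

Lemma exists_between L G : small L -> small G -> setlt lt L G ->
  exists x, above lt x L /\ below lt x G.
Proof.
  intros HL HG LG.
  destruct (classic (nonempty L)) as [NL|NL]; destruct (classic (nonempty G)) as [NG|NG].
  - exact (Hu1 L G NL NG HL HG LG).
  - destruct (Hu2 L NL HL) as [? [y [? [_ [Ly _]]]]].
    exists y. split; [exact Ly|]. intros g Gg. exfalso. apply NG. exists g. exact Gg.
  - destruct (Hu2 G NG HG) as [x [? [? [xG _]]]].
    exists x. split; [|exact xG]. intros l Ll. exfalso. apply NL. exists l. exact Ll.
  - pose proof P_infinite as [e _]. exists (e 0).
    split; intros k Hk; exfalso; [apply NL | apply NG]; exists k; exact Hk.
Qed.

Lemma exists_incomp K : small K -> exists z, incomp_set lt z K.
Proof.
  intros HK. destruct (classic (nonempty K)) as [NK|NK].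
  - destruct (Hu2 K NK HK) as [? [? [z [_ [_ Kz]]]]]. exists z. exact Kz.
  - pose proof P_infinite as [e _]. exists (e 0).
    intros k Kk. exfalso. apply NK. exists k. exact Kk.
Qed.

Lemma full_between L G : small L -> small G -> setlt lt L G ->
  full_size (fun x => above lt x L /\ below lt x G).
Proof.
  intros HL HG LG. apply (full_size_of_fresh P lt); [exact lt_irrefl|]. intros HS.
  destruct (exists_between L G HL HG LG) as [x0 Hx0].
  destruct (exists_between _ G HS HG) as [x [Sx xG]].
  { intros s g [_ sG] Gg. exact (sG g Gg). }
  exists x. split; [split; [|exact xG] | exact Sx].
  intros l Ll. exact (lt_trans l x0 x (proj1 Hx0 l Ll) (Sx x0 Hx0)).
Qed.

Lemma full_below K : small K -> full_size (fun x => below lt x K).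
Proof.
  intros HK. apply (full_size_mono P (fun x => above lt x (fun _ => False) /\ below lt x K)).
  - apply full_between; [exact empty_small | exact HK | intros a b []].
  - intros x [_ xK]. exact xK.
Qed.

Lemma full_above K : small K -> full_size (fun x => above lt x K).
Proof.
  intros HK. apply (full_size_mono P (fun x => above lt x K /\ below lt x (fun _ => False))).
  - apply full_between; [exact HK | exact empty_small | intros a b _ []].
  - intros x [Kx _]. exact Kx.
Qed.

(* The fresh element is taken incomparable also to a point below and a point above [K]. *)
Lemma full_incomp K : small K -> full_size (fun z => incomp_set lt z K).
Proof.
  intros HK. apply (full_size_of_fresh P (fun y z => incomp lt z y)).
  { intros x [H _]. apply H. right. reflexivity. }
  intros HS.
  destruct (exists_between (fun _ => False) K empty_small HK ltac:(intros a b [])) as [x0 [_ x0K]].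
  destruct (exists_between K (fun _ => False) HK empty_small ltac:(intros a b _ [])) as [y0 [Ky0 _]].
  set (T := fun t => (incomp_set lt t K \/ t = x0) \/ t = y0).
  assert (HT : small T) by (apply small_setU1, small_setU1; assumption).
  destruct (exists_incomp T HT) as [z Tz].
  assert (Kz : incomp_set lt z K).
  { intros k Kk.
    destruct (Tz x0 (or_introl (or_intror eq_refl))) as [_ x0z].
    destruct (Tz y0 (or_intror eq_refl)) as [zy0 _].
    split; intro Hle.
    - apply zy0. left. exact (le_lt_trans z k y0 Hle (Ky0 k Kk)).
    - apply x0z. left. exact (lt_le_trans x0 k z (x0K k Kk) Hle). }
  exists z. split; [exact Kz|]. intros y Ky. exact (Tz y (or_introl (or_introl Ky))).
Qed.

Hypothesis P_regular : regular_size P.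

Record incr_pinj (U : P -> P -> Prop) : Prop := {
  incr_pinj_functional : forall a b b', U a b -> U a b' -> b = b';
  incr_pinj_injective : forall a a' b, U a b -> U a' b -> a = a';
  incr_pinj_incr : forall a a' b b', U a b -> U a' b' -> lt a a' -> lt b b' }.

Record small_incr_pinj (U : P -> P -> Prop) : Prop := {
  small_incr_pinj_pinj : incr_pinj U;
  small_incr_pinj_dom : small (dom U);
  small_incr_pinj_ran : small (ran U) }.

Lemma incr_pinj_of_pairs (U : P -> P -> Prop) :
  (forall a b a' b', U a b -> U a' b' -> exists V, incr_pinj V /\ V a b /\ V a' b') ->
  incr_pinj U.
Proof.
  intros pairs. split.
  - intros a b b' H H'. destruct (pairs _ _ _ _ H H') as [V [HV [V1 V2]]].
    exact (incr_pinj_functional V HV a b b' V1 V2).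
  - intros a a' b H H'. destruct (pairs _ _ _ _ H H') as [V [HV [V1 V2]]].
    exact (incr_pinj_injective V HV a a' b V1 V2).
  - intros a a' b b' H H'. destruct (pairs _ _ _ _ H H') as [V [HV [V1 V2]]].
    exact (incr_pinj_incr V HV a a' b b' V1 V2).
Qed.

Lemma small_incr_pinj_pair a b c d : a <> b -> c <> d ->
  (lt a b -> lt c d) -> (lt b a -> lt d c) ->
  small_incr_pinj (fun x y => (x = a /\ y = c) \/ (x = b /\ y = d)).
Proof.
  intros ab cd abcd badc. split; [split|..].
  - intros x y y' [[-> ->]|[-> ->]] [[E ->]|[E ->]]; congruence.
  - intros x x' y [[-> ->]|[-> ->]] [[-> E]|[-> E]]; congruence.
  - intros x x' y y' [[-> ->]|[-> ->]] [[-> ->]|[-> ->]] Hlt; auto;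
      exfalso; exact (lt_irrefl _ Hlt).
  - apply (small_sub P (fun x => x = a \/ x = b)); [exact (small_pair P P_infinite a b)|].
    intros x [y [[-> _]|[-> _]]]; auto.
  - apply (small_sub P (fun y => y = c \/ y = d)); [exact (small_pair P P_infinite c d)|].
    intros y [x [[_ ->]|[_ ->]]]; auto.
Qed.

Lemma small_incr_pinj_add U a b : small_incr_pinj U -> ~ dom U a -> ~ ran U b ->
  (forall a' b', U a' b' -> lt a' a -> lt b' b) ->
  (forall a' b', U a' b' -> lt a a' -> lt b b') ->
  small_incr_pinj (fun x y => U x y \/ (x = a /\ y = b)).
Proof.
  intros [[U_fun U_inj U_incr] U_dom U_ran] Na Nb below_a above_a.
  split; [split|..].
  - intros x y y' [H|[-> ->]] [H'|[E ->]]; eauto;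
      exfalso; [apply Na | apply Na]; subst; eexists; eauto.
  - intros x x' y [H|[-> ->]] [H'|[-> E]]; eauto;
      exfalso; [apply Nb | apply Nb]; subst; eexists; eauto.
  - intros x x' y y' [H|[-> ->]] [H'|[-> ->]] Hlt; eauto.
    exfalso. exact (lt_irrefl _ Hlt).
  - apply (small_sub P (fun x => dom U x \/ x = a)); [exact (small_setU1 P P_infinite _ a U_dom)|].
    intros x [y [H|[-> _]]]; [left; exists y; exact H | right; reflexivity].
  - apply (small_sub P (fun y => ran U y \/ y = b)); [exact (small_setU1 P P_infinite _ b U_ran)|].
    intros y [x [H|[_ ->]]]; [left; exists x; exact H | right; reflexivity].
Qed.

Lemma extend_dom U p : small_incr_pinj U -> exists V, small_incr_pinj V /\ incl U V /\ dom V p.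
Proof.
  intros HU. destruct (classic (dom U p)) as [Dp|Dp].
  { exists U. split; [exact HU | split; [intros a b H; exact H | exact Dp]]. }
  destruct HU as [[U_fun U_inj U_incr] U_dom U_ran].
  set (L := fun y => exists d, U d y /\ lt d p).
  set (G := fun y => exists d, U d y /\ lt p d).
  assert (HL : small L)
    by (apply (small_sub P (ran U)); [exact U_ran | intros y [d [H _]]; exists d; exact H]).
  assert (HG : small G)
    by (apply (small_sub P (ran U)); [exact U_ran | intros y [d [H _]]; exists d; exact H]).
  assert (LG : setlt lt L G).
  { intros y y' [d [Hd dp]] [d' [Hd' pd']]. exact (U_incr d d' y y' Hd Hd' (lt_trans _ _ _ dp pd')). }
  destruct (full_size_not_small P _ _ (full_between L G HL HG LG) U_ran) as [y [[Ly yG] Ny]].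
  exists (fun x z => U x z \/ (x = p /\ z = y)). split; [|split].
  - apply small_incr_pinj_add; [split; [split|..]; assumption | exact Dp | exact Ny |..].
    + intros a' b' H Hlt. apply Ly. exists a'. auto.
    + intros a' b' H Hlt. apply yG. exists a'. auto.
  - intros a b H. left. exact H.
  - exists y. right. auto.
Qed.

Lemma extend_ran U q : small_incr_pinj U -> exists V, small_incr_pinj V /\ incl U V /\ ran V q.
Proof.
  intros HU. destruct (classic (ran U q)) as [Rq|Rq].
  { exists U. split; [exact HU | split; [intros a b H; exact H | exact Rq]]. }
  destruct (exists_incomp (dom U) (small_incr_pinj_dom U HU)) as [z Hz].
  exists (fun x y => U x y \/ (x = z /\ y = q)). split; [|split].
  - apply small_incr_pinj_add; [exact HU | | exact Rq |..].
    + intros Dz. destruct (Hz z Dz) as [H _]. apply H. right. reflexivity.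
    + intros a' b' H Hlt. exfalso. destruct (Hz a' (ex_intro _ b' H)) as [_ N]. apply N. left. exact Hlt.
    + intros a' b' H Hlt. exfalso. destruct (Hz a' (ex_intro _ b' H)) as [N _]. apply N. left. exact Hlt.
  - intros a b H. left. exact H.
  - exists z. right. auto.
Qed.

Definition next_stage (U : P -> P -> Prop) (p : P) : P -> P -> Prop :=
  epsilon (inhabits U) (fun V => small_incr_pinj V /\ incl U V /\ dom V p /\ ran V p).

Lemma next_stage_spec U p : small_incr_pinj U ->
  small_incr_pinj (next_stage U p) /\ incl U (next_stage U p) /\
  dom (next_stage U p) p /\ ran (next_stage U p) p.
Proof.
  intros HU.
  apply (epsilon_spec (inhabits U) (fun V => small_incr_pinj V /\ incl U V /\ dom V p /\ ran V p)).
  destruct (extend_dom U p HU) as [V1 [HV1 [UV1 DV1]]].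
  destruct (extend_ran V1 p HV1) as [V2 [HV2 [V12 RV2]]].
  exists V2. split; [exact HV2 | split; [|split; [|exact RV2]]].
  - intros a b H. exact (V12 a b (UV1 a b H)).
  - destruct DV1 as [b H]. exists b. exact (V12 p b H).
Qed.

Lemma bijective_hom_of_incr_pinj U : incr_pinj U ->
  (forall a, dom U a) -> (forall b, ran U b) ->
  exists F, bijective F /\ homomorphism lt F /\ forall a b, U a b -> F a = b.
Proof.
  intros [U_fun U_inj U_incr] U_total U_onto.
  set (F a := epsilon (inhabits a) (U a)).
  assert (HF : forall a, U a (F a)) by (intro a; apply epsilon_spec, U_total).
  exists F. split; [split|split].
  - intros a a' E. apply (U_inj a a' (F a)); [exact (HF a) | rewrite E; exact (HF a')].
  - intros b. destruct (U_onto b) as [a Hab]. exists a. exact (U_fun a _ _ (HF a) Hab).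
  - intros a a' Hlt. exact (U_incr a a' _ _ (HF a) (HF a') Hlt).
  - intros a b Hab. exact (U_fun a _ _ (HF a) Hab).
Qed.


Section BackAndForth.
Variable W : P -> P -> Prop.
Hypotheses (W_wf : well_founded W) (W_total : forall v w, v <> w -> W v w \/ W w v)
  (W_segment_small : forall w, small (fun v => W v w)).
Variable U0 : P -> P -> Prop.
Hypothesis U0_small_incr_pinj : small_incr_pinj U0.

Definition stage : P -> P -> P -> Prop :=
  Fix W_wf (fun _ => P -> P -> Prop)
    (fun w rec => next_stage (fun a b => U0 a b \/ exists v (h : W v w), rec v h a b) w).

Definition stages_below (w : P) (a b : P) : Prop := U0 a b \/ exists v (_ : W v w), stage v a b.

Lemma stage_unfold w : stage w = next_stage (stages_below w) w.
Proof.
  unfold stage. rewrite Fix_eq; [reflexivity|].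
  intros x f g Hfg. do 2 f_equal.
  apply functional_extensionality. intro a. apply functional_extensionality. intro b.
  do 2 f_equal. apply functional_extensionality. intro v.
  f_equal. apply functional_extensionality. intro h. rewrite Hfg. reflexivity.
Qed.

Definition stage_ok (w : P) : Prop :=
  small_incr_pinj (stage w) /\ incl (stages_below w) (stage w).

Lemma stage_mono v w : W v w -> stage_ok w -> incl (stage v) (stage w).
Proof. intros vw [_ Hw] a b H. apply Hw. right. exists v, vw. exact H. Qed.

Lemma stage_pair v v' a b a' b' : stage_ok v -> stage_ok v' ->
  stage v a b -> stage v' a' b' -> exists V, incr_pinj V /\ V a b /\ V a' b'.
Proof.
  intros Hv Hv' H H'. destruct (classic (v = v')) as [<- | neq].
  - exists (stage v). split; [apply (proj1 Hv) | auto].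
  - destruct (W_total v v' neq) as [vv' | v'v].
    + exists (stage v'). split; [apply (proj1 Hv') | split; [exact (stage_mono v v' vv' Hv' a b H) | exact H']].
    + exists (stage v). split; [apply (proj1 Hv) | split; [exact H | exact (stage_mono v' v v'v Hv a' b' H')]].
Qed.

Lemma stages_below_small_incr_pinj w :
  (forall v, W v w -> stage_ok v) -> small_incr_pinj (stages_below w).
Proof.
  intros IH.
  assert (seed_pair : forall v a b a' b', W v w -> U0 a b -> stage v a' b' ->
            exists V, incr_pinj V /\ V a b /\ V a' b').
  { intros v a b a' b' vw H H'. destruct (IH v vw) as [Hv Hincl].
    exists (stage v). split; [apply Hv | split; [apply Hincl; left; exact H | exact H']]. }
  split.
  - apply incr_pinj_of_pairs.
    intros a b a' b' [H|[v [vw H]]] [H'|[v' [v'w H']]].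
    + exists U0. split; [apply U0_small_incr_pinj | auto].
    + exact (seed_pair v' a b a' b' v'w H H').
    + destruct (seed_pair v a' b' a b vw H' H) as [V [HV [V1 V2]]]. eauto.
    + exact (stage_pair v v' a b a' b' (IH v vw) (IH v' v'w) H H').
  - apply (small_sub P (fun a => dom U0 a \/ exists v, W v w /\ dom (stage v) a)).
    + apply small_setU; [exact P_infinite | exact P_regular | apply U0_small_incr_pinj |].
      apply small_bigcup; [exact P_regular | apply W_segment_small |].
      intros v vw. apply (IH v vw).
    + intros a [b [H|[v [vw H]]]]; [left | right; exists v; split; [exact vw|]]; exists b; exact H.
  - apply (small_sub P (fun b => ran U0 b \/ exists v, W v w /\ ran (stage v) b)).
    + apply small_setU; [exact P_infinite | exact P_regular | apply U0_small_incr_pinj |].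
      apply small_bigcup; [exact P_regular | apply W_segment_small |].
      intros v vw. apply (IH v vw).
    + intros b [a [H|[v [vw H]]]]; [left | right; exists v; split; [exact vw|]]; exists a; exact H.
Qed.

Lemma stage_spec w : stage_ok w /\ dom (stage w) w /\ ran (stage w) w.
Proof.
  induction w as [w IH] using (well_founded_ind W_wf).
  assert (Hbelow := stages_below_small_incr_pinj w (fun v vw => proj1 (IH v vw))).
  unfold stage_ok. rewrite (stage_unfold w).
  destruct (next_stage_spec _ w Hbelow) as [Hnext [Hincl [Hdom Hran]]].
  split; [split|split]; assumption.
Qed.

Lemma extend_to_bijective_hom :
  exists F, bijective F /\ homomorphism lt F /\ forall a b, U0 a b -> F a = b.
Proof.
  destruct (bijective_hom_of_incr_pinj (fun a b => exists w, stage w a b))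
    as [F [Fbij [Fhom FU]]].
  - apply incr_pinj_of_pairs. intros a b a' b' [v H] [v' H'].
    exact (stage_pair v v' a b a' b' (proj1 (stage_spec v)) (proj1 (stage_spec v')) H H').
  - intro a. destruct (stage_spec a) as [_ [[b H] _]]. exists b, a. exact H.
  - intro b. destruct (stage_spec b) as [_ [_ [a H]]]. exists a, b. exact H.
  - exists F. split; [exact Fbij | split; [exact Fhom|]].
    intros a b H. apply FU. exists a. apply (proj2 (proj1 (stage_spec a))). left. exact H.
Qed.

End BackAndForth.

Lemma not_reversible : ~ reversible lt.
Proof.
  intros Hrev. pose proof P_infinite as [e _]. set (a := e 0).
  destruct (exists_incomp (fun x => x = a) (small_single P P_infinite a)) as [b Hb].
  destruct (exists_between (fun x => x = a) (fun _ => False) (small_single P P_infinite a)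
              (small_empty P P_infinite) ltac:(intros x y _ [])) as [d [ad _]].
  destruct (Hb a eq_refl) as [not_ba not_ab].
  destruct (small_segment_well_order P) as [W [W_wf [W_total W_seg]]].
  destruct (extend_to_bijective_hom W W_wf W_total W_seg
              (fun x y => (x = a /\ y = a) \/ (x = b /\ y = d))) as [F [Fbij [Fhom Fab]]].
  { apply small_incr_pinj_pair.
    - intros ->. apply not_ab. right. reflexivity.
    - intros E. apply (lt_irrefl a). rewrite E at 2. exact (ad a eq_refl).
    - intros Hlt. exfalso. apply not_ab. left. exact Hlt.
    - intros Hlt. exfalso. apply not_ba. left. exact Hlt. }
  destruct (Hrev F Fbij Fhom) as [_ Fiff].
  apply not_ab. left. apply Fiff.
  rewrite (Fab a a (or_introl (conj eq_refl eq_refl))), (Fab b d (or_intror (conj eq_refl eq_refl))).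
  exact (ad a eq_refl).
Qed.

End Universal.

Section HomogeneousUniversal.
Hypothesis lt_hu : homogeneous_universal lt.

Lemma realize_one_point_extension (ltQ : option P -> option P -> Prop) (M : P -> Prop) :
  strict_po ltQ -> (forall p q, ltQ (Some p) (Some q) <-> lt p q) -> small M ->
  exists x, forall m, M m ->
    (lt m x <-> ltQ (Some m) None) /\ (lt x m <-> ltQ None (Some m)) /\ x <> m.
Proof.
  intros Q_po Q_ext HM. destruct lt_hu as [lt_homog lt_univ].
  destruct (infinite_shift P P_infinite) as [p0 [sh [sh_inj sh_p0]]].
  assert (option_inj : exists h : option P -> P, injective h).
  { exists (fun o => match o with None => p0 | Some p => sh p end).
    intros [p|] [q|] E; [f_equal; exact (sh_inj p q E) | exfalso; exact (sh_p0 p E)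
                        | exfalso; exact (sh_p0 q (eq_sym E)) | reflexivity]. }
  destruct (lt_univ _ ltQ Q_po option_inj) as [em [em_inj em_iff]].
  set (A := fun y => exists m, M m /\ y = em (Some m)).
  set (f y := epsilon (inhabits y) (fun m => y = em (Some m))).
  assert (f_em : forall m, f (em (Some m)) = m).
  { intro m. symmetry. assert (E : em (Some m) = em (Some (f (em (Some m))))).
    { apply (epsilon_spec (inhabits (em (Some m))) (fun m' => em (Some m) = em (Some m'))).
      exists m. reflexivity. }
    apply em_inj in E. injection E as E. exact E. }
  assert (f_iso : partial_iso lt A M f).
  { split; [|split; [|split]].
    - intros y [m [Mm ->]]. rewrite f_em. exact Mm.
    - intros y y' [m [Mm ->]] [m' [Mm' ->]]. rewrite !f_em. intros ->. reflexivity.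
    - intros m Mm. exists (em (Some m)). split; [exists m; auto | apply f_em].
    - intros y y' [m [Mm ->]] [m' [Mm' ->]]. rewrite !f_em, <- em_iff. apply Q_ext. }
  destruct (lt_homog A M f (small_image P M (fun m => em (Some m)) HM) HM f_iso)
    as [g [[[g_inj _] g_iff] g_f]].
  assert (g_em : forall m, M m -> g (em (Some m)) = m).
  { intros m Mm. rewrite g_f; [apply f_em | exists m; auto]. }
  assert (g_em_iff : forall o o', lt (g (em o)) (g (em o')) <-> ltQ o o').
  { intros o o'. rewrite <- g_iff, <- em_iff. reflexivity. }
  exists (g (em None)). intros m Mm.
  pose proof (g_em_iff (Some m) None) as below_x.
  pose proof (g_em_iff None (Some m)) as above_x.
  rewrite (g_em m Mm) in below_x, above_x.
  split; [exact below_x | split; [exact above_x|]].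
  intros E. rewrite <- (g_em m Mm) in E. apply g_inj, em_inj in E. discriminate.
Qed.

Definition cut_ext (L G : P -> Prop) (o o' : option P) : Prop :=
  match o, o' with
  | Some p, Some q => lt p q
  | Some p, None => exists l, L l /\ le_of lt p l
  | None, Some q => exists g, G g /\ le_of lt g q
  | None, None => False
  end.

Lemma cut_ext_strict_po L G : setlt lt L G -> strict_po (cut_ext L G).
Proof.
  intros LG. split.
  - intros [p|]; [exact (lt_irrefl p) | simpl; tauto].
  - intros [p|] [q|] [r|]; simpl; try tauto.
    + apply lt_trans.
    + intros pq [l [Ll ql]]. exists l. split; [exact Ll | left; exact (lt_le_trans p q l pq ql)].
    + intros [l [Ll pl]] [g [Gg gr]].
      exact (le_lt_trans p l r pl (lt_le_trans l g r (LG l g Ll Gg) gr)).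
    + intros [g [Gg gq]] qr. exists g. split; [exact Gg | left; exact (le_lt_trans g q r gq qr)].
    + intros [g [Gg gq]] [l [Ll ql]].
      exact (lt_irrefl l (lt_le_trans l g l (LG l g Ll Gg) (le_trans g q l gq ql))).
Qed.

Lemma realize_cut L G M : small L -> small G -> small M -> setlt lt L G ->
  exists x, forall m, M m ->
    (lt m x <-> exists l, L l /\ le_of lt m l) /\
    (lt x m <-> exists g, G g /\ le_of lt g m) /\ x <> m.
Proof.
  intros HL HG HM LG.
  exact (realize_one_point_extension (cut_ext L G) M (cut_ext_strict_po L G LG)
           (fun p q => iff_refl _) HM).
Qed.

Lemma homogeneous_universal_u1 : regular_size P -> u1 lt.
Proof.
  intros P_regular L G _ _ HL HG LG.
  destruct (realize_cut L G (fun m => L m \/ G m) HL HG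
              (small_setU P P_infinite P_regular L G HL HG) LG) as [x Hx].
  exists x. split.
  - intros l Ll. apply (proj1 (Hx l (or_introl Ll))). exists l. split; [exact Ll | right; reflexivity].
  - intros g Gg. apply (proj1 (proj2 (Hx g (or_intror Gg)))).
    exists g. split; [exact Gg | right; reflexivity].
Qed.

Lemma homogeneous_universal_u2 : u2 lt.
Proof.
  intros K _ HK.
  destruct (realize_cut (fun _ => False) K K empty_small HK HK ltac:(intros a b [])) as [x Hx].
  destruct (realize_cut K (fun _ => False) K HK empty_small HK ltac:(intros a b _ [])) as [y Hy].
  destruct (realize_cut (fun _ => False) (fun _ => False) K empty_small empty_small HK
              ltac:(intros a b [])) as [z Hz].
  exists x, y, z. split; [|split].
  - intros k Kk. apply (proj1 (proj2 (Hx k Kk))). exists k. split; [exact Kk | right; reflexivity].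
  - intros k Kk. apply (proj1 (Hy k Kk)). exists k. split; [exact Kk | right; reflexivity].
  - intros k Kk. destruct (Hz k Kk) as [[kz _] [[zk _] neq]]. split.
    + intros [Hlt | E]; [destruct (zk Hlt) as [g [[] _]] | exact (neq E)].
    + intros [Hlt | E]; [destruct (kz Hlt) as [l [[] _]] | exact (neq (eq_sym E))].
Qed.

End HomogeneousUniversal.
End Poset.

Theorem theorem3p5 (P : Type) (lt : P -> P -> Prop) :
  strict_po lt -> infinite_type P ->
  ( (u1 lt /\ u2 lt) ->
    (forall L G K : P -> Prop,
       small L -> small G -> small K ->
       nonempty L -> nonempty G -> nonempty K -> setlt lt L G ->
       full_size (fun x => above lt x L /\ below lt x G) /\
       full_size (fun x => below lt x K) /\
       full_size (fun x => above lt x K) /\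
       full_size (fun x => incomp_set lt x K)) /\
    (regular_size P -> ~ reversible lt) ) /\
  (regular_size P -> homogeneous_universal lt -> ~ reversible lt).
Proof.
  intros lt_po P_infinite. split.
  - intros [Hu1 Hu2]. split.
    + intros L G K HL HG HK _ _ _ LG. split; [|split; [|split]].
      * exact (full_between P lt lt_po P_infinite Hu1 Hu2 L G HL HG LG).
      * exact (full_below P lt lt_po P_infinite Hu1 Hu2 K HK).
      * exact (full_above P lt lt_po P_infinite Hu1 Hu2 K HK).
      * exact (full_incomp P lt lt_po P_infinite Hu1 Hu2 K HK).
    + intros P_regular. exact (not_reversible P lt lt_po P_infinite Hu1 Hu2 P_regular).
  - intros P_regular lt_hu. apply (not_reversible P lt lt_po P_infinite); [| |exact P_regular].
    + exact (homogeneous_universal_u1 P lt lt_po P_infinite lt_hu P_regular).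
    + exact (homogeneous_universal_u2 P lt lt_po P_infinite lt_hu).
Qed.
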